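(* Let $M=(S,\mathrm{Act},P)$ be an MDP and $T\subseteq S$. Let $(x,r,\sigma)$ with $x\in[0,1]^S$, $r\in\mathbb{N}_\infty^S$ and $\sigma$ a strategy satisfy: (1) $D^{\sigma}(r)\le r$; (2) $x\le B^{\sigma}(x)$; (3) for all $s\in S\setminus T$, $x(s)>0$ implies $r(s)<\infty$ (inequalities pointwise). Then for all $s\in S$: $\Pr^{\max}_s(\Diamond T)\ge\Pr^{\sigma}_s(\Diamond T)\ge x(s)$.
   Context: An MDP is a tuple $M=(S,\mathrm{Act},P)$ with $S$ finite, $\mathrm{Act}$ finite, $P\colon S\times\mathrm{Act}\times S\to[0,1]$ with $\sum_{s'}P(s,a,s')\in\{0,1\}$; $\mathrm{Act}(s)=\{a\mid\sum_{s'}P(s,a,s')=1\}$ is nonempty for all $s$; $\mathrm{Post}(s,a)=\{s'\mid P(s,a,s')>0\}$. A strategy is $\sigma\colon S\to\mathrm{Act}$ with $\sigma(s)\in\mathrm{Act}(s)$, inducing a Markov chain with transitions $P(s,\sigma(s),\cdot)$; $\Pr^\sigma_s(\Diamond T)$ is the probability of visiting $T$ from $s$ and $\Pr^{\max}_s(\Diamond T)=\max_\sigma\Pr^\sigma_s(\Diamond T)$. $\mathbb{N}_\infty=\mathbb{N}\cup\{\infty\}$, $1+\infty=\infty$. $D^{\sigma}(r)(s)=0$ for $s\in T$ and $1+\min_{s'\in\mathrm{Post}(s,\sigma(s))}r(s')$ for $s\notin T$. $B^{\sigma}(x)(s)=1$ for $s\in T$ and $\sum_{s'\in\mathrm{Post}(s,\sigma(s))}P(s,\sigma(s),s')x(s')$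 for $s\notin T$. *)

From HB Require Import structures.
From mathcomp Require Import all_boot all_order all_algebra.
From mathcomp Require Import boolp classical_sets reals.
Set Implicit Arguments. Unset Strict Implicit. Unset Printing Implicit Defensive.
Import Order.TTheory GRing.Theory Num.Theory.
Local Open Scope ring_scope.

Section MDP.
Variables (R : realType) (S Act : finType) (P : S -> Act -> S -> R).

Definition is_MDP : Prop :=
  (forall s a s', 0 <= P s a s' <= 1) /\
  (forall s a, (\sum_(s' : S) P s a s' == 0) || (\sum_(s' : S) P s a s' == 1)) /\
  (forall s, exists a : Act, \sum_(s' : S) P s a s' = 1).

(* sigma(s) in Act(s) for every s *)
Definition strategyb (sigma : S -> Act) : bool :=
  [forall s, \sum_(s' : S) P s (sigma s) s' == 1].

Definition Post (s : S) (a : Act) : pred S := fun s' => 0 < P s a s'.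

Variable T : {set S}.

Fixpoint reach_within (sigma : S -> Act) (n : nat) (s : S) : R :=
  match n with
  | 0 => if s \in T then 1 else 0
  | n.+1 => if s \in T then 1
            else \sum_(s' : S) P s (sigma s) s' * reach_within sigma n s'
  end.

(* Pr^sigma_s(<> T) = sup_n Pr^sigma_s(<>^{<= n} T) (union of increasing events) *)
Definition Pr_reach (sigma : S -> Act) (s : S) : R :=
  sup [set reach_within sigma n s | n in [set: nat]].

(* Pr^max_s(<> T) = max over (memoryless) strategies *)
Definition Pr_max_reach (s : S) : R :=
  \big[Num.max/0]_(sigma : {ffun S -> Act} | strategyb sigma) Pr_reach sigma s.

(* N_infinity = option nat, None = infinity *)
Definition ninf := option nat.
Definition ninf_le (a b : ninf) : bool :=
  match b, a with
  | None, _ => true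
  | Some _, None => false
  | Some m, Some n => (n <= m)%N
  end.
Definition ninf_min (a b : ninf) : ninf :=
  match a, b with
  | None, _ => b
  | _, None => a
  | Some n, Some m => Some (minn n m)
  end.
Definition ninf_succ (a : ninf) : ninf := omap succn a.

Definition Dop (sigma : S -> Act) (r : S -> ninf) (s : S) : ninf :=
  if s \in T then Some 0%N
  else ninf_succ (\big[ninf_min/None]_(s' | Post s (sigma s) s') r s').

Definition Bop (sigma : S -> Act) (x : S -> R) (s : S) : R :=
  if s \in T then 1
  else \sum_(s' | Post s (sigma s) s') P s (sigma s) s' * x s'.

End MDP.

From HB Require Import structures.
From mathcomp Require Import all_boot all_order all_algebra.
From mathcomp Require Import boolp classical_sets reals.
Import Order.TTheory GRing.Theory Num.Theory.
Local Open Scope ring_scope.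

(* The gap [d := x - Pr^sigma(<> T)] satisfies [d s <= sum_s' P s (sigma s) s' * d s']
   outside [T], since [x <= B^sigma(x)] while [B^sigma(Pr^sigma(<> T)) <= Pr^sigma(<> T)].
   As the weights form a probability distribution, a positive maximum of [d] at [s]
   is therefore attained again at every [sigma]-successor of [s]. A positive gap
   forces [s \notin T] and [x s > 0], so the rank [r s] is finite, and
   [D^sigma(r) <= r] provides a successor of strictly smaller rank: descending on
   ranks gives a contradiction. *)

Lemma mean_ge_max_eq (R : realDomainType) (I : finType) (w d : I -> R) (i0 : I) :
  (forall i, 0 <= w i) -> \sum_i w i = 1 ->
  (forall i, d i <= d i0) -> d i0 <= \sum_i w i * d i ->
  forall i, 0 < w i -> d i = d i0.
Proof.
move=> w_ge0 w_sum1 d_max d_mean i w_gt0; apply/eqP; rewrite eq_le d_max /=.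
rewrite leNgt; apply/negP => di_lt.
have : 0 < \sum_j w j * (d i0 - d j).
  rewrite (bigD1 i) //=; apply: ltr_pwDl; first by rewrite mulr_gt0 ?subr_gt0.
  by apply: sumr_ge0 => j _; rewrite mulr_ge0 ?subr_ge0.
under eq_bigr do rewrite mulrBr.
by rewrite sumrB -mulr_suml w_sum1 mul1r subr_gt0 ltNge d_mean.
Qed.

Lemma ninf_bigmin_attained {I : finType} {Q : pred I} {F : I -> ninf} {k} :
  \big[ninf_min/None]_(i | Q i) F i = Some k -> exists2 i, Q i & F i = Some k.
Proof.
elim/big_rec: _ k => // i acc Qi IH k.
case Fi: (F i) => [a|]; case: acc IH => [b|] IH //= [<-]; try by exists i.
- by case: leqP => _; [exists i | exact: IH].
- exact: IH.
Qed.

Section ReachabilityUnderStrategy.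
Set Implicit Arguments.
Unset Strict Implicit.
Variables (R : realType) (S Act : finType) (P : S -> Act -> S -> R) (T : {set S}).
Hypothesis MDP_P : is_MDP P.
Variable sigma : S -> Act.
Hypothesis strategy_sigma : strategyb P sigma.

Local Notation reach n := (reach_within P T sigma n).
Local Notation Pr := (Pr_reach P T sigma).

Lemma MDP_P_ge0 s a s' : 0 <= P s a s'.
Proof. by case: MDP_P => /(_ s a s') /andP[]. Qed.

Lemma strategy_sum1 s : \sum_s' P s (sigma s) s' = 1.
Proof. exact/eqP/(forallP strategy_sigma). Qed.

Lemma Bop_notin (y : S -> R) s : s \notin T ->
  Bop P T sigma y s = \sum_s' P s (sigma s) s' * y s'.
Proof.
move=> /negbTE sT; rewrite /Bop sT big_mkcond; apply: eq_bigr => s' _.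
case: ifPn => //; rewrite /Post /= -leNgt => P_le0.
have /eqP -> : P s (sigma s) s' == 0 by rewrite eq_le P_le0 MDP_P_ge0.
by rewrite mul0r.
Qed.

Lemma reach_within_ge0 n s : 0 <= reach n s.
Proof.
elim: n s => [|n IH] s /=; case: ifP => // _.
by apply: sumr_ge0 => s' _; rewrite mulr_ge0 ?MDP_P_ge0.
Qed.

Lemma reach_within_le1 n s : reach n s <= 1.
Proof.
elim: n s => [|n IH] s /=; case: ifP => // _.
rewrite -(strategy_sum1 s); apply: ler_sum => s' _.
by rewrite ler_piMr ?MDP_P_ge0.
Qed.

Lemma reach_within_leS n s : reach n s <= reach n.+1 s.
Proof.
elim: n s => [|n IH] s /=; case: ifP => // _.
  apply: sumr_ge0 => s' _; apply: mulr_ge0; first exact: MDP_P_ge0.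
  exact: (reach_within_ge0 0 s').
by apply: ler_sum => s' _; rewrite ler_wpM2l ?MDP_P_ge0.
Qed.

Lemma reach_within_le m n s : (m <= n)%N -> reach m s <= reach n s.
Proof.
move=> /subnK <-; elim: (n - m)%N => // k IH.
by apply: le_trans IH (reach_within_leS _ _).
Qed.

Lemma has_sup_reach_within s : has_sup [set reach n s | n in [set: nat]]%classic.
Proof.
split; first by exists (reach 0 s), 0%N.
by exists 1 => _ [n _ <-]; apply: reach_within_le1.
Qed.

Lemma reach_within_le_Pr n s : reach n s <= Pr s.
Proof. by apply: (sup_upper_bound (has_sup_reach_within s)); exists n. Qed.

Lemma Pr_reach_ge0 s : 0 <= Pr s.
Proof. exact: le_trans (reach_within_ge0 0 s) (reach_within_le_Pr 0 s). Qed.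

Lemma Pr_reach_in_T s : s \in T -> 1 <= Pr s.
Proof. by move=> sT; apply: le_trans (reach_within_le_Pr 0 s); rewrite /= sT. Qed.

(* Finitely many states, so one horizon approximates all of them at once. *)
Lemma Pr_reach_approx e : 0 < e -> exists N, forall s, Pr s - e <= reach N s.
Proof.
move=> e_gt0.
have approx s : exists n, Pr s - e < reach n s.
  by have [_ [n _ <-] ?] := sup_adherent e_gt0 (has_sup_reach_within s); exists n.
exists (\max_s xchoose (approx s))%N => s.
apply/(le_trans (ltW (xchooseP (approx s))))/reach_within_le.
exact: (leq_bigmax s).
Qed.

Lemma Bop_Pr_reach_le s : Bop P T sigma Pr s <= Pr s.
Proof.
have [sT|sT] := boolP (s \in T); first by rewrite /Bop sT Pr_reach_in_T.
rewrite Bop_notin //; apply/ler_addgt0Pr => e e_gt0.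
have [N approxN] := Pr_reach_approx e_gt0.
apply: le_trans (lerD (reach_within_le_Pr N.+1 s) (lexx e)).
rewrite /= (negbTE sT) -[e in _ + e]mul1r -(strategy_sum1 s) mulr_suml -big_split /=.
apply: ler_sum => s' _; rewrite -mulrDr ler_wpM2l ?MDP_P_ge0 //.
by rewrite -lerBlDr.
Qed.

Lemma Pr_reach_le_Pr_max s : Pr s <= Pr_max_reach P T s.
Proof.
pose f : {ffun S -> Act} := [ffun s => sigma s].
have fE : (f : S -> Act) = sigma by apply/funext => s'; rewrite ffunE.
have f_strategy : strategyb P f by rewrite fE.
rewrite -fE /Pr_max_reach.
exact: (@le_bigmax_cond _ _ _ _ _ _
  (fun g : {ffun S -> Act} => Pr_reach P T g s) f_strategy).
Qed.

Section Certificate.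
Variables (x : S -> R) (r : S -> ninf).
Hypotheses (x_le1 : forall s, x s <= 1)
           (r_ranking : forall s, ninf_le (Dop P T sigma r s) (r s))
           (x_subharmonic : forall s, x s <= Bop P T sigma x s)
           (x_pos_rank_finite : forall s, s \notin T -> 0 < x s -> r s != None).

Let d s := x s - Pr s.

Lemma gap_le_mean s : s \notin T -> d s <= \sum_s' P s (sigma s) s' * d s'.
Proof.
move=> sT; under eq_bigr do rewrite mulrBr; rewrite sumrB -!Bop_notin //.
exact: lerB (x_subharmonic s) (Bop_Pr_reach_le s).
Qed.

Lemma gap_pos_finite_rank s : 0 < d s -> s \notin T /\ exists k, r s = Some k.
Proof.
move=> d_gt0; have sT : s \notin T.
  apply/negP => /Pr_reach_in_T Pr1.
  by move: d_gt0; rewrite subr_gt0 ltNge (le_trans (x_le1 s)).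
have x_gt0 : 0 < x s by apply: le_lt_trans (Pr_reach_ge0 s) _; rewrite -subr_gt0.
split=> //; move: (x_pos_rank_finite sT x_gt0).
by case: (r s) => [k|] // _; exists k.
Qed.

Lemma rank_descent s k : s \notin T -> r s = Some k ->
  exists2 s', Post P s (sigma s) s' & exists2 j, r s' = Some j & (j < k)%N.
Proof.
move=> sT rs; move: (r_ranking s); rewrite /Dop (negbTE sT) rs.
case min_r: (\big[ninf_min/None]_(s' | _) r s') => [j|] //= jk.
by have [s' ? ?] := ninf_bigmin_attained min_r; exists s' => //; exists j.
Qed.

Lemma max_gap_le0 s : (forall s', d s' <= d s) -> d s <= 0.
Proof.
move=> d_max; rewrite leNgt; apply/negP => d_gt0.
have [_ [k rs]] := gap_pos_finite_rank d_gt0.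
elim/ltn_ind: k s d_max d_gt0 rs => k IH s d_max d_gt0 rs.
have [sT _] := gap_pos_finite_rank d_gt0.
have [s' Ps' [j rs' jk]] := rank_descent sT rs.
have ds' : d s' = d s.
  exact: mean_ge_max_eq (@MDP_P_ge0 s (sigma s)) (strategy_sum1 s) d_max
    (gap_le_mean sT) s' Ps'.
by apply: (IH j jk s'); rewrite ?ds'.
Qed.

Lemma certificate_le_Pr_reach s : x s <= Pr s.
Proof.
have [s_max _ d_max] := @arg_maxP _ _ S s predT d isT.
rewrite -subr_le0; apply: le_trans (d_max s isT) (max_gap_le0 _) => s'.
exact: d_max.
Qed.

End Certificate.
End ReachabilityUnderStrategy.

Theorem proposition5 (R : realType) (S Act : finType) (P : S -> Act -> S -> R)
  (T : {set S}) (x : S -> R) (r : S -> ninf) (sigma : S -> Act) :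
  is_MDP P ->
  strategyb P sigma ->
  (forall s, 0 <= x s <= 1) ->
  (forall s, ninf_le (Dop P T sigma r s) (r s)) ->
  (forall s, x s <= Bop P T sigma x s) ->
  (forall s, s \notin T -> 0 < x s -> r s != None) ->
  forall s, Pr_max_reach P T s >= Pr_reach P T sigma s /\ Pr_reach P T sigma s >= x s.
Proof.
move=> MDP_P strategy_sigma x01 r_ranking x_subharmonic x_pos_rank_finite s.
split; first exact: Pr_reach_le_Pr_max.
apply: certificate_le_Pr_reach r_ranking x_subharmonic x_pos_rank_finite s => // s'.
by case/andP: (x01 s').
Qed.
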